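(* Let $\kappa>0$, let $x_1=x_1(\kappa)$ be a real differentiable function of $\kappa$, let $a\neq0$, $b$ be real constants, and set $$\Theta=\kappa(x+x_1+4\kappa^2t),\qquad \gamma=x+x_1+\kappa\,\frac{d x_1}{d\kappa}+(12\kappa^2+2a)t+2b .$$ Then, on the set where $2\kappa\gamma-\sin2\Theta\neq0$, the functions $$u=2\partial_x^2\ln(2\kappa\gamma-\sin2\Theta)=\frac{32\kappa^2\sin\Theta(\kappa\gamma\cos\Theta-\sin\Theta)}{(2\kappa\gamma-\sin2\Theta)^2},\qquad \varphi_1=\frac{4\kappa\sqrt a\,\sin\Theta}{2\kappa\gamma-\sin2\Theta}$$ solve the KdV equation with one self-consistent source $$u_t+6uu_x+u_{xxx}+4\varphi_1\varphi_{1,x}=0,\qquad \varphi_{1,xx}+(\kappa^2+u)\varphi_1=0$$ (here $\lambda_1=\kappa^2$ and $\sqrt a$ is any fixed square root of $a$).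
   Context: This is the solution obtained from the generalized binary Darboux transformation applied to $u=0$ with $f=\sin\Theta$ (a solution of $f_{xx}+\kappa^2f=0$, $f_t=4\kappa^2 f_x$) and $e(t)=at+b$. *)

From Stdlib Require Import Reals.
From Coquelicot Require Import Coquelicot.
Open Scope R_scope.

Definition Theta (kappa x1v t x : R) : R := kappa * (x + x1v + 4 * kappa ^ 2 * t).

(* gamma = x + x1 + kappa dx1/dkappa + (12 kappa^2 + 2a) t + 2b,
   with x1v = x1(kappa), dx1v = x1'(kappa) *)
Definition gamma (kappa x1v dx1v a b t x : R) : R :=
  x + x1v + kappa * dx1v + (12 * kappa ^ 2 + 2 * a) * t + 2 * b.

Definition Den (kappa x1v dx1v a b t x : R) : R :=
  2 * kappa * gamma kappa x1v dx1v a b t x - sin (2 * Theta kappa x1v t x).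

Definition u_sol (kappa x1v dx1v a b t x : R) : R :=
  32 * kappa ^ 2 * sin (Theta kappa x1v t x)
  * (kappa * gamma kappa x1v dx1v a b t x * cos (Theta kappa x1v t x)
     - sin (Theta kappa x1v t x))
  / (Den kappa x1v dx1v a b t x) ^ 2.

(* phi1 = 4 kappa sqrt(a) sin Theta / Den, with sqrt(a) = s any complex
   number with s^2 = a (complex-valued in general, real when a > 0 and s real) *)
Definition phi1_sol (kappa x1v dx1v a b : R) (s : C) (t x : R) : C :=
  Cmult s (RtoC (4 * kappa * sin (Theta kappa x1v t x) / Den kappa x1v dx1v a b t x)).

(* With D = 2 kappa gamma - sin 2 Theta we have Theta_x = kappa and gamma_x = 1,
   so every x-derivative of D is a trigonometric monomial in 2 Theta, and
   D_t = 2 kappa (12 kappa^2 + 2a) - 8 kappa^3 cos 2 Theta.  Hence u = 2 (ln D)'',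
   phi = 4 kappa sin Theta / D and all derivatives entering the two equations are
   explicit rational functions of sin Theta, cos Theta and gamma with powers of D
   as denominators.  Clearing D, both equations become polynomial identities
   modulo sin^2 + cos^2 = 1.  The square root of a only enters through
   phi1 phi1_x = a phi phi_x. *)

From Stdlib Require Import Reals Lra Lia Nsatz.
From Coquelicot Require Import Coquelicot.
Open Scope R_scope.

Lemma locally_neq0 (f : R -> R) (x : R) :
  continuous f x -> f x <> 0 -> locally x (fun y => f y <> 0).
Proof. intros Hc Hf. apply (Hc (fun z => z <> 0)). exact (open_neq 0 (f x) Hf). Qed.

Lemma is_derive_ln_abs (f : R -> R) (x f' : R) :
  is_derive f x f' -> f x <> 0 -> is_derive (fun y => ln (Rabs (f y))) x (f' / f x).
Proof.
intros Hf Hf0.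
assert (Hpos : 0 < Rabs (f x)) by now apply Rabs_pos_lt.
replace (f' / f x) with (sign (f x) * f' * / Rabs (f x)).
- exact (is_derive_comp ln _ x _ _ (is_derive_ln _ Hpos) (is_derive_Rabs f x f' Hf Hf0)).
- destruct (Rdichotomy _ _ Hf0) as [Hn | Hp].
  + rewrite sign_eq_m1, Rabs_left by exact Hn. field; exact Hf0.
  + rewrite sign_eq_1, Rabs_right by lra. field; exact Hf0.
Qed.

Lemma is_derive_Cscale (s : C) (F : R -> R) (x F' : R) :
  is_derive F x F' -> is_derive (fun y => (s * RtoC (F y))%C) x (s * RtoC F')%C.
Proof.
intros H.
pose proof (is_derive_scal_l (V := C_R_NormedModule) F x F' s H) as Hs.
rewrite scal_R_Cmult, Cmult_comm in Hs.
eapply is_derive_ext, Hs. intros y. simpl. now rewrite scal_R_Cmult, Cmult_comm.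
Qed.

Lemma Cmult_scale_sq (s : C) (a f g : R) :
  (s * s)%C = RtoC a -> ((s * RtoC f) * (s * RtoC g))%C = RtoC (a * f * g).
Proof. intros hs. rewrite !RtoC_mult, <- hs. ring. Qed.

Section KdVSource.

Variables kappa x1 dx1 a b : R.

Let D := Den kappa x1 dx1 a b.
Let Th := Theta kappa x1.

Definition Dx t x := 2 * kappa * (1 - cos (2 * Th t x)).
Definition Dxx t x := 4 * kappa ^ 2 * sin (2 * Th t x).
Definition Dxxx t x := 8 * kappa ^ 3 * cos (2 * Th t x).
Definition Dxxxx t x := - 16 * kappa ^ 4 * sin (2 * Th t x).
Definition Dxxxxx t x := - 32 * kappa ^ 5 * cos (2 * Th t x).
Definition Dt t x := 24 * kappa ^ 3 + 4 * a * kappa - 8 * kappa ^ 3 * cos (2 * Th t x).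
Definition Dxt t x := 16 * kappa ^ 4 * sin (2 * Th t x).
Definition Dxxt t x := 32 * kappa ^ 5 * cos (2 * Th t x).

Definition u_log t x := 2 * (Dxx t x / D t x - Dx t x ^ 2 / D t x ^ 2).
Definition u_t t x := 2 * (Dxxt t x / D t x - Dxx t x * Dt t x / D t x ^ 2
  - 2 * Dx t x * Dxt t x / D t x ^ 2 + 2 * Dx t x ^ 2 * Dt t x / D t x ^ 3).
Definition u_x t x := 2 * (Dxxx t x / D t x - 3 * Dx t x * Dxx t x / D t x ^ 2
  + 2 * Dx t x ^ 3 / D t x ^ 3).
Definition u_xx t x := 2 * (Dxxxx t x / D t x - 4 * Dx t x * Dxxx t x / D t x ^ 2
  - 3 * Dxx t x ^ 2 / D t x ^ 2 + 12 * Dx t x ^ 2 * Dxx t x / D t x ^ 3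
  - 6 * Dx t x ^ 4 / D t x ^ 4).
Definition u_xxx t x := 2 * (Dxxxxx t x / D t x - 5 * Dx t x * Dxxxx t x / D t x ^ 2
  - 10 * Dxx t x * Dxxx t x / D t x ^ 2 + 20 * Dx t x ^ 2 * Dxxx t x / D t x ^ 3
  + 30 * Dx t x * Dxx t x ^ 2 / D t x ^ 3 - 60 * Dx t x ^ 3 * Dxx t x / D t x ^ 4
  + 24 * Dx t x ^ 5 / D t x ^ 5).

(* The real factor of [phi1 = sqrt a * phi]. *)
Definition phi t x := 4 * kappa * sin (Th t x) / D t x.
Definition phi_x t x := 4 * kappa * (kappa * cos (Th t x) / D t x
  - sin (Th t x) * Dx t x / D t x ^ 2).
Definition phi_xx t x := 4 * kappa * (- kappa ^ 2 * sin (Th t x) / D t x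
  - 2 * kappa * cos (Th t x) * Dx t x / D t x ^ 2
  - sin (Th t x) * Dxx t x / D t x ^ 2 + 2 * sin (Th t x) * Dx t x ^ 2 / D t x ^ 3).

Ltac nonzero HD :=
  first [ exact I | split; nonzero HD
        | apply Rmult_integral_contrapositive_currified; nonzero HD
        | intro; apply HD; lra ].

Ltac unfold_solution :=
  unfold u_sol, u_log, u_t, u_x, u_xx, u_xxx, phi, phi_x, phi_xx,
    Dx, Dxx, Dxxx, Dxxxx, Dxxxxx, Dt, Dxt, Dxxt, D, Th, Den, gamma, Theta in *;
  cbn [pow] in *.

Ltac derive_explicit t x :=
  intros HD; unfold_solution; auto_derive; rewrite ?Rmult_1_r in *;
  repeat match goal with
  | |- context [sin ?z] => let S := fresh "S" in set (S := sin z) in *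
  | |- context [cos ?z] => let C := fresh "C" in set (C := cos z) in *
  end;
  set (G := x + x1 + kappa * dx1 + (12 * (kappa * kappa) + 2 * a) * t + 2 * b) in *;
  [nonzero HD | field; nonzero HD].

Lemma is_derive_D_x t x : is_derive (fun y => D t y) x (Dx t x).
Proof. unfold_solution. auto_derive; [exact I | ring]. Qed.

Lemma is_derive_log_D_x t x : D t x <> 0 ->
  is_derive (fun y => Dx t y / D t y) x (Dxx t x / D t x - Dx t x ^ 2 / D t x ^ 2).
Proof. derive_explicit t x. Qed.

Lemma is_derive_u_t t x : D t x <> 0 -> is_derive (fun s => u_log s x) t (u_t t x).
Proof. derive_explicit t x. Qed.

Lemma is_derive_u_x t x : D t x <> 0 -> is_derive (fun y => u_log t y) x (u_x t x).
Proof. derive_explicit t x. Qed.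

Lemma is_derive_u_xx t x : D t x <> 0 -> is_derive (fun y => u_x t y) x (u_xx t x).
Proof. derive_explicit t x. Qed.

Lemma is_derive_u_xxx t x : D t x <> 0 -> is_derive (fun y => u_xx t y) x (u_xxx t x).
Proof. derive_explicit t x. Qed.

Lemma is_derive_phi_x t x : D t x <> 0 -> is_derive (fun y => phi t y) x (phi_x t x).
Proof. derive_explicit t x. Qed.

Lemma is_derive_phi_xx t x : D t x <> 0 -> is_derive (fun y => phi_x t y) x (phi_xx t x).
Proof. derive_explicit t x. Qed.

Ltac half_angle_polynomial t x :=
  unfold_solution; rewrite ?sin_2a, ?cos_2a_sin in *;
  pose proof (sin2_cos2 (kappa * (x + x1 + 4 * (kappa * (kappa * 1)) * t))) as HSC;
  unfold Rsqr in HSC;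
  set (S := sin (kappa * (x + x1 + 4 * (kappa * (kappa * 1)) * t))) in *;
  set (C := cos (kappa * (x + x1 + 4 * (kappa * (kappa * 1)) * t))) in *;
  set (G := x + x1 + kappa * dx1 + (12 * (kappa * (kappa * 1)) + 2 * a) * t + 2 * b) in *;
  clearbody S C G.

Lemma kdv_identity t x : D t x <> 0 ->
  u_t t x + 6 * u_log t x * u_x t x + u_xxx t x + 4 * a * (phi t x * phi_x t x) = 0.
Proof. intros HD. half_angle_polynomial t x. field_simplify_eq; [simpl; nsatz | exact HD]. Qed.

Lemma schrodinger_identity t x : D t x <> 0 ->
  phi_xx t x + (kappa ^ 2 + u_log t x) * phi t x = 0.
Proof. intros HD. half_angle_polynomial t x. field_simplify_eq; [simpl; nsatz | exact HD]. Qed.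

(* Both sides vanish where [D = 0], because division by zero returns [0]. *)
Lemma u_sol_eq_u_log t x : u_sol kappa x1 dx1 a b t x = u_log t x.
Proof.
destruct (Req_dec (D t x) 0) as [HD | HD].
- unfold u_sol, u_log. fold D. rewrite HD. unfold Rdiv. rewrite pow_i, Rinv_0 by lia. ring.
- half_angle_polynomial t x. field_simplify_eq; [simpl; nsatz | exact HD].
Qed.

Lemma u_log_eq_log_derivative t x : D t x <> 0 ->
  u_log t x = 2 * Derive_n (fun y => ln (Rabs (D t y))) 2 x.
Proof.
intros HD. cbn [Derive_n].
rewrite (Derive_ext_loc _ (fun y => Dx t y / D t y)).
- unfold u_log. f_equal. symmetry. now apply is_derive_unique, is_derive_log_D_x.
- assert (HDc : continuous (fun y => D t y) x).
  { apply (@ex_derive_continuous R_AbsRing R_NormedModule).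
    eexists; apply is_derive_D_x. }
  apply (filter_imp (fun y => D t y <> 0)); [| exact (locally_neq0 _ _ HDc HD)].
  intros y HDy. apply is_derive_unique, is_derive_ln_abs; [apply is_derive_D_x | exact HDy].
Qed.

Lemma is_derive_u_sol_t t x : D t x <> 0 ->
  is_derive (fun s => u_sol kappa x1 dx1 a b s x) t (u_t t x).
Proof.
intros HD. eapply is_derive_ext, is_derive_u_t, HD.
intros s. symmetry. apply u_sol_eq_u_log.
Qed.

Lemma is_derive_u_sol_x t x : D t x <> 0 ->
  is_derive (fun y => u_sol kappa x1 dx1 a b t y) x (u_x t x).
Proof.
intros HD. eapply is_derive_ext, is_derive_u_x, HD.
intros y. symmetry. apply u_sol_eq_u_log.
Qed.

Variables (s : C) (hs : (s * s)%C = RtoC a).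

Let phi1 := phi1_sol kappa x1 dx1 a b s.

Lemma kdv_with_source t x : D t x <> 0 ->
  Cplus (RtoC (u_t t x + 6 * u_sol kappa x1 dx1 a b t x * u_x t x + u_xxx t x))
        (Cmult (RtoC 4) (Cmult (phi1 t x) (s * RtoC (phi_x t x)))) = RtoC 0.
Proof.
intros HD. change (phi1 t x) with (s * RtoC (phi t x))%C.
rewrite (Cmult_scale_sq _ _ _ _ hs), u_sol_eq_u_log.
rewrite <- (kdv_identity t x HD), !RtoC_plus, !RtoC_mult. ring.
Qed.

Lemma phi1_eigenfunction t x : D t x <> 0 ->
  Cplus (s * RtoC (phi_xx t x))
        (Cmult (RtoC (kappa ^ 2 + u_sol kappa x1 dx1 a b t x)) (phi1 t x)) = RtoC 0.
Proof.
intros HD. change (phi1 t x) with (s * RtoC (phi t x))%C.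
rewrite u_sol_eq_u_log, <- (Cmult_0_r s), <- (schrodinger_identity t x HD).
rewrite !RtoC_plus, !RtoC_mult, !RtoC_plus. ring.
Qed.

End KdVSource.

Theorem mainTheorem3 (kappa : R) (x1 : R -> R) (a b : R) (s : C)
  (hk : 0 < kappa) (hx1 : ex_derive x1 kappa) (ha : a <> 0)
  (hs : Cmult s s = RtoC a) :
  let u := u_sol kappa (x1 kappa) (Derive x1 kappa) a b in
  let phi1 := phi1_sol kappa (x1 kappa) (Derive x1 kappa) a b s in
  let D := Den kappa (x1 kappa) (Derive x1 kappa) a b in
  exists (ut ux uxx uxxx : R -> R -> R) (phix phixx : R -> R -> C),
  forall t x : R, D t x <> 0 ->
    u t x = 2 * Derive_n (fun y => ln (Rabs (D t y))) 2 x /\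
    is_derive (fun s0 => u s0 x) t (ut t x) /\
    is_derive (fun y => u t y) x (ux t x) /\
    is_derive (fun y => ux t y) x (uxx t x) /\
    is_derive (fun y => uxx t y) x (uxxx t x) /\
    is_derive (fun y => phi1 t y) x (phix t x) /\
    is_derive (fun y => phix t y) x (phixx t x) /\
    Cplus (RtoC (ut t x + 6 * u t x * ux t x + uxxx t x))
          (Cmult (RtoC 4) (Cmult (phi1 t x) (phix t x))) = RtoC 0 /\
    Cplus (phixx t x) (Cmult (RtoC (kappa ^ 2 + u t x)) (phi1 t x)) = RtoC 0.
Proof.
cbv zeta.
set (X := x1 kappa); set (dX := Derive x1 kappa).
exists (u_t kappa X dX a b), (u_x kappa X dX a b),
  (u_xx kappa X dX a b), (u_xxx kappa X dX a b),
  (fun t x => s * RtoC (phi_x kappa X dX a b t x))%C,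
  (fun t x => s * RtoC (phi_xx kappa X dX a b t x))%C.
intros t x HD.
repeat match goal with |- _ /\ _ => split end.
- rewrite u_sol_eq_u_log. now apply u_log_eq_log_derivative.
- now apply is_derive_u_sol_t.
- now apply is_derive_u_sol_x.
- now apply is_derive_u_xx.
- now apply is_derive_u_xxx.
- now apply is_derive_Cscale, is_derive_phi_x.
- now apply is_derive_Cscale, is_derive_phi_xx.
- now apply kdv_with_source.
- now apply phi1_eigenfunction.
Qed.
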